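(* Let $T:\mathbb C_n[z]\to\mathbb C_m[z]$ be linear with $m=\max\{\deg T(f):f\in\mathbb C_n[z]\}$. Let $C=\Phi^{-1}(H)$ be an open circular domain, $\Phi(z)=\frac{az+b}{cz+d}$, $ad-bc\neq0$ (with $c=0$ if $C$ is a half-plane), and let $S=\phi_m^{-1}T\phi_n:\mathbb C_n[z]\to\mathbb C_m[z]$. The following are equivalent: (i) $T(f)$ is $C$-stable or zero whenever $f$ has degree $n$ and is $C$-stable; (ii) $S(f)$ is $H$-stable or zero whenever $f$ has degree $n$ and is $H$-stable; (iii) $S(f)$ is $H$-stable or zero whenever $f$ has degree at most $n$ and is $H$-stable. Moreover the following are equivalent: (iv) $T(f)\in\pi(\partial C)\cup\{0\}$ whenever $f$ has degree $n$ and $f\in\pi(\partial C)$; (v) $S(f)\in\pi(\mathbb R)\cup\{0\}$ whenever $f$ has degree $n$ and $f\in\pi(\mathbb R)$; (vi) $S(f)\in\pi(\mathbb R)\cup\{0\}$ whenever $f$ has degree at most $n$ and $f\in\pi(\mathbb R)$.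
   Context: $H=\{\Im z>0\}$; an open circular domain is the image of $H$ under a Möbius transformation. For $\Omega\subseteq\mathbb C$, a univariate polynomial is $\Omega$-stable if it is non-zero and has no zeros in $\Omega$, and $\pi(\Omega)$ is the set of non-zero univariate polynomials all of whose zeros lie in $\Omega$. For $k\in\mathbb N$, $\phi_k:\mathbb C_k[z]\to\mathbb C_k[z]$ is the invertible linear map $\phi_k(f)(z)=(cz+d)^kf(\Phi(z))$. *)

From HB Require Import structures.
From mathcomp Require Import all_boot all_order all_algebra.
From mathcomp Require Import complex reals.
Set Implicit Arguments. Unset Strict Implicit. Unset Printing Implicit Defensive.
Import Order.TTheory GRing.Theory Num.Theory.
Local Open Scope ring_scope.

Section Defs.
Variable R : realType.
Local Notation C := (R[i]).

Definition upperH : pred C := fun z => 0 < 'Im z.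

Definition realLine : pred C := fun z => 'Im z == 0.

Definition mobius (a b c d : C) (z : C) : C := (a * z + b) / (c * z + d).

Definition circ_dom (a b c d : C) : pred C :=
  fun z => (c * z + d != 0) && upperH (mobius a b c d z).

Definition boundary (A : pred C) : C -> Prop :=
  fun z => forall e : R, 0 < e ->
    (exists w, `|w - z| < (e%:C)%C /\ A w) /\ (exists w, `|w - z| < (e%:C)%C /\ ~~ A w).

Definition is_half_plane (A : pred C) : Prop :=
  exists u v : C, u != 0 /\ forall z, A z = (0 < 'Im (u * z + v)).

Definition stable (Om : C -> Prop) (f : {poly C}) : Prop :=
  f != 0 /\ forall z, Om z -> ~~ root f z.

Definition zeros_in (Om : C -> Prop) (f : {poly C}) : Prop :=
  f != 0 /\ forall z, root f z -> Om z.

(* phi_k(f)(z) = (c z + d)^k f(Phi z) = sum_i f_i (a z + b)^i (c z + d)^(k-i),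
   for f in C_k[z]. *)
Definition phi (a b c d : C) (k : nat) (f : {poly C}) : {poly C} :=
  \sum_(i < k.+1) f`_i *: (('X * a%:P + b%:P) ^+ i * ('X * c%:P + d%:P) ^+ (k - i)).

End Defs.

(* Roots of [phi_k f] correspond to roots of [f] under [Phi], except for the
   pole [-d/c] of [Phi], which is a root exactly when [phi_k f] has degree less
   than [k]. So for polynomials of full degree, [C]-stability (resp. having all
   zeros on the boundary of [C], i.e. on [Phi^-1(R)] or at the pole) of [phi_n g]
   and [phi_m (S g)] is [H]-stability (resp. real-rootedness) of [g] and [S g].
   What remains is to pass from degree exactly [n] to degree at most [n]. A
   polynomial of degree at most [n] with zeros in the closed lower half-plane
   (resp. on [R]) is a coefficientwise limit of such polynomials of degree
   exactly [n]: multiply by factors [1 + eps X], then take a small generic real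
   translate, which also keeps [phi_n g] and [phi_m (S g)] of full degree.
   Stability survives these limits by an elementary Hurwitz-type estimate: if
   [p] has degree at most [N] and no zeros in [Im z > 0], then
   [(Im w)^N |p(w + iy)| <= (Im w + y)^N |p(w)|] for [Im w > 0] and [y >= 0];
   this inequality passes to limits and forbids [p(w) = 0]. *)

From HB Require Import structures.
From mathcomp Require Import all_boot all_order all_algebra.
From mathcomp Require Import complex reals.
From mathcomp Require Import ring lra zify.
Import Order.TTheory GRing.Theory Num.Theory Normc.
Local Open Scope ring_scope.

Set Implicit Arguments. Unset Strict Implicit. Unset Printing Implicit Defensive.
Local Notation "x %:C" := (real_complex _ x) (format "x %:C") : ring_scope.
Local Notation Im := complex.Im.

Section Modulus.
Variable R : realType.
Local Notation C := (R[i]).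

Lemma normcE (z : C) : `|z| = (normc z)%:C.
Proof. by case: z. Qed.

Lemma normc_ge0 (z : C) : 0 <= normc z.
Proof. by case: z => x y; rewrite /normc sqrtr_ge0. Qed.

Lemma normc_eq0 (z : C) : (normc z == 0) = (z == 0).
Proof. by apply/eqP/eqP => [/eq0_normc|->] //; rewrite normc0. Qed.

Lemma normc_gt0 (z : C) : z != 0 -> 0 < normc z.
Proof. by move=> z0; rewrite lt_def normc_eq0 z0 normc_ge0. Qed.

Lemma ler_normcB (x y : C) : normc x - normc y <= normc (x - y).
Proof. by rewrite lerBlDr; have := le_normcD (x - y) y; rewrite subrK. Qed.

Lemma normc_Im (z : C) : `|Im z| <= normc z.
Proof.
case: z => x y; rewrite /normc /=.
by rewrite -sqrtr_sqr ler_sqrt ?addr_ge0 ?sqr_ge0 // lerDr sqr_ge0.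
Qed.

Lemma normc_real (y : R) : normc (y%:C) = `|y|.
Proof. by rewrite /normc /= expr0n /= addr0 sqrtr_sqr. Qed.

Lemma normc_imaginary (y : R) : normc (Complex 0 y) = `|y|.
Proof. by rewrite /normc /= expr0n /= add0r sqrtr_sqr. Qed.

Lemma normcX (z : C) k : normc (z ^+ k) = normc z ^+ k.
Proof. by elim: k => [|k IH]; rewrite ?expr0 ?normc1 // !exprS normcM IH. Qed.

Lemma normc_prod (I : Type) (r : seq I) (F : I -> C) :
  normc (\prod_(i <- r) F i) = \prod_(i <- r) normc (F i).
Proof. by elim: r => [|x r IH]; rewrite ?big_nil ?normc1 // !big_cons normcM IH. Qed.

Lemma ler_normc_sum (I : Type) (r : seq I) (F : I -> C) :
  normc (\sum_(i <- r) F i) <= \sum_(i <- r) normc (F i).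
Proof.
elim: r => [|x r IH]; first by rewrite !big_nil normc0.
by rewrite !big_cons; apply: le_trans (le_normcD _ _) _; rewrite lerD2l.
Qed.

Lemma ltc_normc (z : C) (e : R) : (`|z| < e%:C) = (normc z < e).
Proof. by rewrite normcE ltcR. Qed.

End Modulus.

Section HalfPlaneGrowth.
Variable R : realType.
Local Notation C := (R[i]).
Variable s : R.
Hypothesis s_sign : s * s = 1.

Definition stable_or0 (q : {poly C}) := q = 0 \/ forall z, root q z -> s * Im z <= 0.

Definition growth_bound (N : nat) (p : {poly C}) (w : C) (y : R) :=
  (s * Im w) ^+ N * normc p.[w + Complex 0 (s * y)] <= (s * Im w + y) ^+ N * normc p.[w].

Lemma normr_sign : `|s| = 1.
Proof.
have : `|s| * `|s| = 1 by rewrite -normrM s_sign normr1.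
by have := normr_ge0 s; nra.
Qed.

(* Since [normc (w - r) >= s * Im w] when [s * Im r <= 0], moving [w] by [s * y]
   in the direction of the half-plane multiplies [normc (w - r)] by at most
   [1 + y / (s * Im w)]. *)
Lemma growth_factor (y : R) (w r : C) : s * Im r <= 0 -> 0 < s * Im w -> 0 <= y ->
  (s * Im w) * normc (w + Complex 0 (s * y) - r) <= (s * Im w + y) * normc (w - r).
Proof.
move=> hr hw hy.
have -> : w + Complex 0 (s * y) - r = (w - r) + Complex 0 (s * y) by ring.
have hD := le_normcD (w - r) (Complex 0 (s * y)).
rewrite normc_imaginary normrM normr_sign mul1r (ger0_norm hy) in hD.
have hIm : s * Im w <= normc (w - r).
  have : s * Im (w - r) <= normc (w - r).
    by apply: le_trans (ler_norm _) _; rewrite normrM normr_sign mul1r normc_Im.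
  by rewrite raddfB /= mulrBr; lra.
by have := normc_ge0 (w - r); nra.
Qed.

Lemma growth_prod (y : R) (w : C) (rs : seq C) :
  (forall r, r \in rs -> s * Im r <= 0) -> 0 < s * Im w -> 0 <= y ->
  (s * Im w) ^+ size rs * \prod_(r <- rs) normc (w + Complex 0 (s * y) - r)
  <= (s * Im w + y) ^+ size rs * \prod_(r <- rs) normc (w - r).
Proof.
move=> hrs hw hy; elim: rs hrs => [|r rs IH] hrs; first by rewrite !big_nil !expr0.
rewrite !big_cons /= !exprS mulrACA [X in _ <= X]mulrACA.
have hr : s * Im r <= 0 by apply: hrs; rewrite mem_head.
have IH' := IH (fun z hz => hrs z (mem_behead (s:=r :: rs) hz)).
have hA : 0 <= (s * Im w) ^+ size rs by apply: exprn_ge0; lra.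
have hP : 0 <= \prod_(r <- rs) normc (w + Complex 0 (s * y) - r).
  by apply: prodr_ge0 => i _; exact: normc_ge0.
apply: ler_pM; [|exact: mulr_ge0|exact: growth_factor|exact: IH'].
by apply: mulr_ge0; [lra|exact: normc_ge0].
Qed.

Lemma stable_growth (N : nat) (p : {poly C}) (w : C) (y : R) :
  stable_or0 p -> (size p <= N.+1)%N -> 0 < s * Im w -> 0 <= y -> growth_bound N p w y.
Proof.
rewrite /growth_bound => hp hsz hw hy.
have [->|p0] := eqVneq p 0; first by rewrite !horner0 normc0 !mulr0.
have hroots : forall z, root p z -> s * Im z <= 0.
  by case: hp => // p0'; rewrite p0' eqxx in p0.
have [rs prs] := closed_field_poly_normal p.
have hrs : forall r, r \in rs -> s * Im r <= 0.
  move=> r hr; apply: hroots; rewrite prs rootE hornerZ horner_prod mulf_eq0.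
  rewrite prodf_seq_eq0; apply/orP; right.
  by apply/hasP; exists r; rewrite //= hornerXsubC subrr.
have le : (size rs <= N)%N.
  by move: hsz; rewrite {1}prs size_scale ?lead_coef_eq0 // size_prod_XsubC.
rewrite prs !hornerZ !horner_prod !normcM !normc_prod.
under eq_bigr do rewrite hornerXsubC.
under [X in _ <= _ * (_ * X)]eq_bigr do rewrite hornerXsubC.
have := growth_prod hrs hw hy.
rewrite -(subnKC le) !exprD.
set a := (s * Im w) ^+ size rs; set b := (s * Im w + y) ^+ size rs.
set a' := (s * Im w) ^+ (N - size rs); set b' := (s * Im w + y) ^+ (N - size rs).
set P1 := \prod_(_ <- rs) _; set P2 := \prod_(_ <- rs) normc (w - _) => h.
have hab' : a' <= b' by apply: lerXn2r; rewrite ?nnegrE; lra.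
have hL := normc_ge0 (lead_coef p).
have ha' : 0 <= a' by apply: exprn_ge0; lra.
have hP2 : 0 <= P2 by apply: prodr_ge0 => i _; exact: normc_ge0.
have hb : 0 <= b by apply: exprn_ge0; lra.
rewrite [X in X <= _](_ : _ = (normc (lead_coef p) * a') * (a * P1)); last by ring.
rewrite [X in _ <= X](_ : _ = (normc (lead_coef p) * b') * (b * P2)); last by ring.
apply: le_trans (ler_wpM2l _ h) _; first exact: mulr_ge0.
by apply: ler_wpM2r; [exact: mulr_ge0|exact: ler_wpM2l].
Qed.

(* A zero at [w] would propagate, through the bound, to the infinitely many
   points [w + Complex 0 (s * y)]. *)
Lemma growth_nonvanishing (N : nat) (p : {poly C}) (w : C) :
  (size p <= N.+1)%N -> p != 0 -> 0 < s * Im w ->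
  (forall y, 0 <= y -> growth_bound N p w y) -> p.[w] != 0.
Proof.
rewrite /growth_bound => hsz p0 hw hQ; apply/negP => /eqP pw0.
have hA : 0 < (s * Im w) ^+ N by apply: exprn_gt0.
have allr : forall y, 0 <= y -> root p (w + Complex 0 (s * y)).
  move=> y hy; have := hQ y hy; rewrite pw0 normc0 mulr0 pmulr_rle0 // => h.
  by rewrite rootE -normc_eq0 eq_le h normc_ge0.
have s0 : s != 0.
  by apply/eqP => s0; move: s_sign; rewrite s0 mul0r => /eqP; rewrite eq_sym oner_eq0.
set zs := [seq w + Complex 0 (s * k%:R) | k <- iota 1 N.+1].
have : (size zs < size p)%N.
  apply: max_poly_roots => //.
    by apply/allP => x /mapP [k _ ->]; apply: allr; exact: ler0n.
  rewrite map_inj_uniq ?iota_uniq // => k1 k2 /(congr1 (fun z => Im (z - w))) /=.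
  by rewrite !(addrC w) !addrK => /(mulfI s0) /eqP; rewrite eqr_nat => /eqP.
by rewrite size_map size_iota ltnNge hsz.
Qed.

Lemma growth_bound_limit (N : nat) (p : {poly C}) (w : C) (y : R) :
  0 < s * Im w -> 0 <= y ->
  (forall eta, 0 < eta -> exists q : {poly C},
     [/\ normc (q.[w] - p.[w]) <= eta,
         normc (q.[w + Complex 0 (s * y)] - p.[w + Complex 0 (s * y)]) <= eta
       & growth_bound N q w y]) ->
  growth_bound N p w y.
Proof.
rewrite /growth_bound => hw hy hfam.
set A := (s * Im w) ^+ N; set B := (s * Im w + y) ^+ N.
have hA : 0 <= A by apply: exprn_ge0; lra.
have hB : 0 <= B by apply: exprn_ge0; lra.
apply/ler_addgt0Pr => e he.
have heta : 0 < e / (A + B + 1) by apply: divr_gt0 => //; lra.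
have [q [h1 h2 h3]] := hfam _ heta.
set eta := e / (A + B + 1) in heta h1 h2.
have ee : (A + B + 1) * eta = e by rewrite /eta mulrC -mulrA mulVf ?mulr1 //; lra.
have i1 : A * normc p.[w + Complex 0 (s * y)] <= A * (normc q.[w + Complex 0 (s * y)] + eta).
  apply: ler_wpM2l => //; rewrite -lerBlDl.
  by apply: le_trans (ler_normcB _ _) _; rewrite -normcN opprB.
have i2 : B * normc q.[w] <= B * (normc p.[w] + eta).
  by apply: ler_wpM2l => //; rewrite -lerBlDl; apply: le_trans (ler_normcB _ _) h1.
have he2 : 0 <= eta by lra.
rewrite mulrDr in i1; rewrite mulrDr in i2; rewrite !mulrDl mul1r in ee.
rewrite -/A -/B in h3; lra.
Qed.

Lemma stable_or0_closed (N : nat) (p : {poly C}) : (size p <= N.+1)%N ->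
  (forall (z1 z2 : C) (eta : R), 0 < eta -> exists q : {poly C},
     [/\ (size q <= N.+1)%N, stable_or0 q,
         normc (q.[z1] - p.[z1]) <= eta & normc (q.[z2] - p.[z2]) <= eta]) ->
  stable_or0 p.
Proof.
move=> hsz hfam; have [->|p0] := eqVneq p 0; first by left.
right => z hz; rewrite leNgt; apply/negP => hzs.
suff hQ : forall y, 0 <= y -> growth_bound N p z y.
  by move: (growth_nonvanishing hsz p0 hzs hQ); rewrite -rootE hz.
move=> y hy; apply: growth_bound_limit => // eta heta.
have [q [qs qn h1 h2]] := hfam z (z + Complex 0 (s * y)) eta heta.
by exists q; split => //; exact: stable_growth.
Qed.

End HalfPlaneGrowth.

Section PolyLemmas.
Variable F : nzRingType.

Lemma coefM_top (p q : {poly F}) (i j : nat) :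
  (size p <= i.+1)%N -> (size q <= j.+1)%N -> (p * q)`_(i + j) = p`_i * q`_j.
Proof.
move=> hp hq; rewrite coefM.
have hi : (i < (i + j).+1)%N by rewrite ltnS leq_addr.
rewrite (bigD1 (Ordinal hi)) //= addKn big1 ?addr0 // => l /eqP hl.
have hl' : nat_of_ord l != i by apply/eqP => e; apply: hl; apply: val_inj.
case: (ltngtP l i) hl' => // [lt|gt] _.
  by rewrite [q`__]nth_default ?mulr0 //; apply: leq_trans hq _; rewrite ltn_subRL ltn_add2r.
by rewrite [p`__]nth_default ?mul0r //; apply: leq_trans hp _.
Qed.

Lemma size_exp_linear (p : {poly F}) (n : nat) :
  (size p <= 2)%N -> (size (p ^+ n) <= n.+1)%N.
Proof.
move=> hp; elim: n => [|n IH]; first by rewrite expr0 size_poly1.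
by rewrite exprS; have := size_polyMleq p (p ^+ n); lia.
Qed.

Lemma size_mul_exp_linear (p q : {poly F}) (i j : nat) :
  (size p <= 2)%N -> (size q <= 2)%N -> (size (p ^+ i * q ^+ j)%R <= (i + j).+1)%N.
Proof.
move=> hp hq; have := size_polyMleq (p ^+ i) (q ^+ j).
have := size_exp_linear i hp; have := size_exp_linear j hq.
set si := size (p ^+ i); set sj := size (q ^+ j); set sij := size _; lia.
Qed.

Lemma coef_exp_linear (p : {poly F}) (n : nat) : (size p <= 2)%N -> (p ^+ n)`_n = p`_1 ^+ n.
Proof.
move=> hp; elim: n => [|n IH]; first by rewrite !expr0 coef1.
by rewrite exprS -add1n coefM_top // ?IH ?exprS // size_exp_linear.
Qed.

Lemma coef_size_neq0 (p : {poly F}) (k : nat) : size p = k.+1 -> p`_k != 0.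
Proof. by move=> h; rewrite -[k]/(k.+1.-1) -h -lead_coefE lead_coef_eq0 -size_poly_eq0 h. Qed.

Lemma size_poly_exact (p : {poly F}) (k : nat) :
  (size p <= k.+1)%N -> p`_k != 0 -> size p = k.+1.
Proof.
move=> h1 h2; apply/eqP; rewrite eqn_leq h1 ltnNge; apply/negP => h.
by move: h2; rewrite nth_default ?eqxx.
Qed.

End PolyLemmas.

Section PolyNumDomain.
Variable F : numDomainType.

Lemma poly_eq0_nat (p : {poly F}) : (forall k : nat, p.[k%:R] = 0) -> p = 0.
Proof.
move=> h; apply/eqP; apply: contraT => p0.
have := @max_poly_roots _ p [seq (k%:R : F) | k <- iota 0 (size p)] p0.
rewrite size_map size_iota ltnn; apply.
  by apply/allP => x /mapP [k _ ->]; rewrite rootE h.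
by rewrite map_inj_uniq ?iota_uniq // => x y /eqP; rewrite eqr_nat => /eqP.
Qed.

Lemma eq_poly_except1 (p q : {poly F}) (w0 : F) :
  (forall z, z != w0 -> p.[z] = q.[z]) -> p = q.
Proof.
move=> h; apply/eqP; rewrite -subr_eq0; apply/eqP.
suff : (p - q) * ('X - w0%:P) = 0.
  by move/eqP; rewrite mulf_eq0 polyXsubC_eq0 orbF => /eqP.
apply: poly_eq0_nat => k; rewrite hornerM hornerXsubC.
have [->|ne] := eqVneq (k%:R : F) w0; first by rewrite subrr mulr0.
by rewrite hornerD hornerN h // subrr mul0r.
Qed.

End PolyNumDomain.

Section Phi.
Variable R : realType.
Local Notation C := (R[i]).
Variables a b c d : C.

Lemma size_linear_poly (u v : C) : (size ('X * u%:P + v%:P)%R <= 2)%N.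
Proof.
apply: leq_trans (size_polyD _ _) _; rewrite geq_max size_polyC.
have := size_polyMleq 'X u%:P; rewrite size_polyX size_polyC.
by case: (u != 0); case: (v != 0) => //=; lia.
Qed.

Lemma size_phi (k : nat) (f : {poly C}) : (size (phi a b c d k f) <= k.+1)%N.
Proof.
rewrite /phi; apply: leq_trans (size_sum _ _ _) _.
apply/bigmax_leqP => i _; apply: leq_trans (size_scale_leq _ _) _.
have ik : (i <= k)%N by rewrite -ltnS.
by have := size_mul_exp_linear i (k - i) (size_linear_poly a b) (size_linear_poly c d);
  rewrite subnKC.
Qed.

Lemma phiP (k : nat) (al : C) (f g : {poly C}) :
  phi a b c d k (al *: f + g) = al *: phi a b c d k f + phi a b c d k g.
Proof.
rewrite /phi scaler_sumr -big_split /=; apply: eq_bigr => i _.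
by rewrite coefD coefZ scalerDl scalerA.
Qed.

Lemma phi0 (k : nat) : phi a b c d k 0 = 0.
Proof. by rewrite /phi big1 // => i _; rewrite coef0 scale0r. Qed.

Lemma coef_phi_top (k : nat) (f : {poly C}) :
  (phi a b c d k f)`_k = \sum_(i < k.+1) f`_i * (a ^+ i * c ^+ (k - i)).
Proof.
rewrite /phi coef_sum; apply: eq_bigr => i _; rewrite coefZ; congr (_ * _).
have ik : (i <= k)%N by rewrite -ltnS.
have := @coefM_top _ (('X * a%:P + b%:P) ^+ i) (('X * c%:P + d%:P) ^+ (k - i)) i (k - i).
rewrite subnKC // => -> //; try exact/size_exp_linear/size_linear_poly.
have coef1_lin (u v : C) : ('X * u%:P + v%:P)`_1 = u.
  by rewrite coefD coefMC coefX coefC /= mul1r addr0.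
by rewrite !coef_exp_linear ?size_linear_poly // !coef1_lin.
Qed.

Lemma horner_phi (k : nat) (f : {poly C}) (z : C) : (phi a b c d k f).[z] =
  \sum_(i < k.+1) f`_i * ((a * z + b) ^+ i * (c * z + d) ^+ (k - i)).
Proof.
rewrite /phi horner_sum; apply: eq_bigr => i _.
by rewrite hornerZ hornerM !horner_exp !hornerE ![_ * a]mulrC ![_ * c]mulrC.
Qed.

Lemma horner_phi_mobius (k : nat) (f : {poly C}) (z : C) : (size f <= k.+1)%N ->
  c * z + d != 0 -> (phi a b c d k f).[z] = (c * z + d) ^+ k * f.[mobius a b c d z].
Proof.
move=> hs hz; rewrite horner_phi (horner_coef_wide _ hs) mulr_sumr.
apply: eq_bigr => i _; have ik : (i <= k)%N by rewrite -ltnS.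
have -> : (c * z + d) ^+ k = (c * z + d) ^+ i * (c * z + d) ^+ (k - i).
  by rewrite -exprD subnKC.
by rewrite /mobius expr_div_n; field; rewrite expf_neq0.
Qed.

(* At [w = a / c], the image of the pole of the inverse map, the top
   coefficient of [phi k f] evaluates [f]. *)
Lemma coef_phi_top_horner (k : nat) (f : {poly C}) (w : C) : (size f <= k.+1)%N ->
  a - c * w = 0 -> (phi a b c d k f)`_k = c ^+ k * f.[w].
Proof.
move=> hs hw; rewrite coef_phi_top.
have -> : a = c * w by apply/eqP; rewrite -subr_eq0 hw.
rewrite (horner_coef_wide _ hs) mulr_sumr; apply: eq_bigr => i _.
have ik : (i <= k)%N by rewrite -ltnS.
have -> : c ^+ k = c ^+ i * c ^+ (k - i) by rewrite -exprD subnKC.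
by rewrite exprMn; ring.
Qed.

End Phi.

Section Mobius.
Variable R : realType.
Local Notation C := (R[i]).
Variables a b c d : C.
Hypothesis hD : a * d - b * c != 0.
Local Notation D := (a * d - b * c).
Local Notation Phi := (mobius a b c d).
Local Notation Psi := (mobius d (- b) (- c) a).

Lemma den_mobius_inv z : a - c * z != 0 -> c * Psi z + d = D / (a - c * z).
Proof. by move=> h; rewrite /mobius; field. Qed.

Lemma den_mobius_inv_neq0 z : a - c * z != 0 -> c * Psi z + d != 0.
Proof. by move=> h; rewrite den_mobius_inv // mulf_neq0 // invr_eq0. Qed.

Lemma mobius_invK z : a - c * z != 0 -> Phi (Psi z) = z.
Proof.
move=> h; have h' : - c * z + a != 0 by rewrite mulNr addrC.
rewrite /mobius; field.
have -> : c * (d * z - b) + d * (- c * z + a) = D by ring.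
by rewrite h' hD.
Qed.

Lemma mobiusK z : c * z + d != 0 -> Psi (Phi z) = z.
Proof.
move=> h; rewrite /mobius; field.
have -> : - c * (a * z + b) + a * (c * z + d) = D by ring.
by rewrite h hD.
Qed.

Lemma num_mobius_neq0 z : c * z + d != 0 -> a - c * Phi z != 0.
Proof.
move=> h; have -> : a - c * Phi z = D / (c * z + d) by rewrite /mobius; field.
by rewrite mulf_neq0 // invr_eq0.
Qed.

Lemma phi_invK (k : nat) (f : {poly C}) : (size f <= k.+1)%N ->
  phi d (- b) (- c) a k (phi a b c d k f) = D ^+ k *: f.
Proof.
move=> hs; pose w0 := if c == 0 then 0 else a / c.
apply: (eq_poly_except1 (w0 := w0)) => z hz.
have hz' : a - c * z != 0.
  rewrite /w0 in hz; case: (eqVneq c 0) hz => [c0|c0] hz.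
    by rewrite c0 mul0r subr0; apply: contraNneq hD => ->; rewrite c0 !mul0r mulr0 subr0.
  by apply: contra hz; rewrite subr_eq0 => /eqP ->; rewrite [c * z]mulrC mulfK.
have hz2 : - c * z + a != 0 by rewrite mulNr addrC.
rewrite horner_phi_mobius ?size_phi // horner_phi_mobius ?den_mobius_inv_neq0 //.
rewrite mobius_invK // hornerZ den_mobius_inv // mulrA -exprMn.
by congr (_ ^+ _ * _); rewrite -mulNr addrC; field.
Qed.

Lemma phi_inj (k : nat) (p q : {poly C}) : (size p <= k.+1)%N -> (size q <= k.+1)%N ->
  phi a b c d k p = phi a b c d k q -> p = q.
Proof.
move=> hp hq e; have := phi_invK hp; rewrite e phi_invK // => /eqP.
by rewrite (inj_eq (scalerI _)) ?expf_neq0 // => /eqP.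
Qed.

Lemma phi_eq0 (k : nat) (p : {poly C}) :
  (size p <= k.+1)%N -> phi a b c d k p = 0 -> p = 0.
Proof. by move=> hp e; apply: (phi_inj hp); rewrite ?size_poly0 ?phi0. Qed.

Lemma root_phi_mobius (k : nat) (q : {poly C}) (z : C) :
  (size q <= k.+1)%N -> c * z + d != 0 -> root (phi a b c d k q) z -> root q (Phi z).
Proof.
by move=> hs hz; rewrite !rootE horner_phi_mobius // mulf_eq0 expf_eq0 (negbTE hz) andbF.
Qed.

(* When [phi k q] has full degree, [a - c * w] cannot vanish at a root [w] of
   [q], so every root of [q] is the image of a root of [phi k q]. *)
Lemma root_phi_mobius_inv (k : nat) (q : {poly C}) (w : C) : (size q <= k.+1)%N ->
  (phi a b c d k q)`_k != 0 -> root q w ->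
  [/\ c * Psi w + d != 0, Phi (Psi w) = w & root (phi a b c d k q) (Psi w)].
Proof.
move=> hs hl /rootP hr.
have hne : a - c * w != 0.
  by apply: contra hl => /eqP e; rewrite (coef_phi_top_horner b d hs e) hr mulr0.
split; [exact: den_mobius_inv_neq0|exact: mobius_invK|].
by rewrite rootE horner_phi_mobius ?den_mobius_inv_neq0 // mobius_invK // hr mulr0.
Qed.

End Mobius.

Lemma phi_surj (R : realType) (a b c d : R[i]) (k : nat) (f : {poly R[i]}) :
  a * d - b * c != 0 -> (size f <= k.+1)%N ->
  exists2 g : {poly R[i]}, (size g <= k.+1)%N & phi a b c d k g = f.
Proof.
move=> hD hf; have hD' : d * a - - b * - c = a * d - b * c by ring.
exists (((a * d - b * c) ^+ k)^-1 *: phi d (- b) (- c) a k f).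
  by apply: leq_trans (size_scale_leq _ _) _; exact: size_phi.
have := @phiP R a b c d k ((a * d - b * c) ^+ k)^-1 (phi d (- b) (- c) a k f) 0.
rewrite !addr0 phi0 addr0 => ->.
have := @phi_invK _ d (- b) (- c) a; rewrite hD' !opprK => -> //.
by rewrite scalerA mulVf ?scale1r // expf_neq0.
Qed.

Section HalfPlanePredicates.
Variable R : realType.

Lemma upperHE (z : R[i]) : upperH z = (0 < Im z).
Proof. by rewrite /upperH -complexIm ltcR. Qed.

Lemma realLineE (z : R[i]) : realLine z = (Im z == 0).
Proof. by rewrite /realLine -complexIm; apply/eqP/eqP => [[]|->]. Qed.

Lemma ImD (u v : R[i]) : Im (u + v) = Im u + Im v.
Proof. by case: u => ? ?; case: v. Qed.

Lemma ImB (u v : R[i]) : Im (u - v) = Im u - Im v.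
Proof. by case: u => ? ?; case: v. Qed.

Definition closed_lowerH : pred R[i] := fun z => Im z <= 0.

Lemma stable_upperHE (g : {poly R[i]}) : stable (upperH (R:=R)) g <-> zeros_in closed_lowerH g.
Proof.
split=> [] [g0 h]; split => // z; rewrite /closed_lowerH.
  by move=> hr; rewrite leNgt -upperHE; apply: contraL hr; exact: h.
by rewrite upperHE => hp; apply: contraL hp => /h; rewrite -leNgt.
Qed.

Lemma stable_or0_upperH (q : {poly R[i]}) :
  stable_or0 1 q <-> stable (upperH (R:=R)) q \/ q = 0.
Proof.
split=> [[->|h]|[/stable_upperHE [_ h]|->]]; [by right| | |by left].
  have [->|q0] := eqVneq q 0; first by right.
  by left; apply/stable_upperHE; split => // z /h; rewrite mul1r.
by right => z /h; rewrite mul1r.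
Qed.

Lemma stable_or0_realLine (q : {poly R[i]}) :
  stable_or0 1 q /\ stable_or0 (-1) q <-> zeros_in (realLine (R:=R)) q \/ q = 0.
Proof.
split=> [[[e1|h1] [e2|h2]]|[[q0 h]|->]]; try by right.
  have [->|q0] := eqVneq q 0; first by right.
  left; split => // z hz; rewrite realLineE; apply/eqP.
  by have := h1 z hz; have := h2 z hz; rewrite mul1r mulN1r; lra.
  by split; right => z /h; rewrite realLineE => /eqP ->; rewrite mulr0.
by split; left.
Qed.

End HalfPlanePredicates.

Section MobiusContinuity.
Variable R : realType.
Local Notation C := (R[i]).

Lemma mobius_continuous (al be ga de z : C) (eps : R) : ga * z + de != 0 -> 0 < eps ->
  exists2 e : R, 0 < e & forall w, normc (w - z) < e ->
    ga * w + de != 0 /\ normc (mobius al be ga de w - mobius al be ga de z) < eps.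
Proof.
move=> hz heps.
set q := normc (ga * z + de); have hq : 0 < q by exact: normc_gt0.
set K := normc ga; have hK : 0 <= K := normc_ge0 ga.
set Dn := normc (al * de - be * ga); have hDn : 0 <= Dn := normc_ge0 (al * de - be * ga).
set e1 := q / (2 * (K + 1)); set e2 := eps * q ^+ 2 / (2 * (Dn + 1)).
have he1 : 0 < e1 by apply: divr_gt0 => //; lra.
have he2 : 0 < e2 by apply: divr_gt0; [apply: mulr_gt0 => //; exact: exprn_gt0|lra].
exists (Num.min e1 e2); first by rewrite lt_min he1 he2.
move=> w; rewrite lt_min => /andP [hw1 hw2].
set dist := normc (w - z) in hw1 hw2 *; have hd : 0 <= dist := normc_ge0 (w - z).
have hP : q / 2 <= normc (ga * w + de).
  have e : ga * w + de = (ga * z + de) - (- (ga * (w - z))) by ring.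
  rewrite e; apply: le_trans (ler_normcB _ _); rewrite normcN normcM -/K -/dist -/q.
  have : K * dist <= K * e1 by apply: ler_wpM2l => //; exact: ltW.
  have : K * e1 <= q / 2.
    rewrite /e1 mulrA ler_pdivrMr; last lra.
    have -> : q / 2 * (2 * (K + 1)) = q * K + q by field.
    rewrite mulrC; lra.
  lra.
have hPn : ga * w + de != 0 by rewrite -normc_eq0 gt_eqF //; apply: lt_le_trans hP; lra.
split => //.
have eq : mobius al be ga de w - mobius al be ga de z =
  (al * de - be * ga) * (w - z) / ((ga * w + de) * (ga * z + de)).
  rewrite /mobius; field; by rewrite hPn hz.
rewrite eq normcM normcV !normcM -/q -/dist -/Dn.
set P := normc (ga * w + de) in hP *.
have hP0 : 0 < P by apply: lt_le_trans hP; lra.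
rewrite ltr_pdivrMr; last exact: mulr_gt0.
have h1 : Dn * dist <= (Dn + 1) * dist by rewrite mulrDl mul1r lerDl.
have h2 : (Dn + 1) * dist < (Dn + 1) * e2 by rewrite ltr_pM2l //; lra.
have h3 : (Dn + 1) * e2 = eps * q ^+ 2 / 2 by rewrite /e2; field; lra.
have h4 : eps * (q / 2 * q) <= eps * (P * q).
  by apply: ler_wpM2l; [lra| apply: ler_wpM2r => //; lra].
have h5 : eps * q ^+ 2 / 2 = eps * (q / 2 * q) by rewrite expr2; field.
lra.
Qed.

End MobiusContinuity.

Section Boundary.
Variable R : realType.
Local Notation C := (R[i]).
Variables (a b c d : C).
Hypothesis hD : a * d - b * c != 0.
Local Notation D := (a * d - b * c).
Local Notation Phi := (mobius a b c d).
Local Notation Psi := (mobius d (- b) (- c) a).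
Local Notation Cd := (circ_dom a b c d).

Lemma circ_domE z : Cd z = (c * z + d != 0) && (0 < Im (Phi z)).
Proof. by rewrite /circ_dom upperHE. Qed.

Lemma boundary_circ_dom_sub z : boundary Cd z -> c * z + d = 0 \/ Im (Phi z) = 0.
Proof.
move=> hb; case: (eqVneq (c * z + d) 0) => hz; first by left.
right; apply/eqP; apply: contraT => hI.
have hIp : 0 < `|Im (Phi z)| by rewrite normr_gt0.
case: (mobius_continuous a b hz hIp) => e he hcont.
case: (hb e he) => [[w1 [hw1 hC1]] [w2 [hw2 hC2]]].
rewrite ltc_normc in hw1; rewrite ltc_normc in hw2.
have key : forall w, normc (w - z) < e -> c * w + d != 0 /\
    `|Im (Phi w) - Im (Phi z)| < `|Im (Phi z)|.
  move=> w hw; case: (hcont w hw) => h1 h2; split => //.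
  by rewrite -ImB; apply: le_lt_trans (normc_Im _) h2.
case: (ltgtP (Im (Phi z)) 0) => [neg|pos|eq0]; last by move: hI; rewrite eq0 eqxx.
- case: (key w1 hw1) => _; move: hC1; rewrite circ_domE => /andP [_ p1].
  rewrite (ltr0_norm neg) => h; have := ler_norm (Im (Phi w1) - Im (Phi z)); lra.
- case: (key w2 hw2) => n2; move: hC2; rewrite circ_domE n2 /= -leNgt => p2.
  rewrite (gtr0_norm pos) => h; have := ler_norm (- (Im (Phi w2) - Im (Phi z))).
  rewrite normrN; lra.
Qed.

(* The points [Psi (Complex 0 Y)], which lie in [Cd], tend to the pole as [Y]
   grows, since [Psi zeta - z = D / (c * (a - c * zeta))]. *)
Lemma circ_dom_near_pole (z : C) (e : R) : c * z + d = 0 -> 0 < e ->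
  exists w, normc (w - z) < e /\ Cd w.
Proof.
move=> hz0 he.
have c0 : c != 0.
  by apply: contraNneq hD => c0; move: hz0; rewrite c0 mul0r add0r => ->; rewrite !mulr0 subrr.
have -> : z = - d / c.
  apply: (mulfI c0); rewrite [RHS]mulrC divfK //.
  by apply/eqP; rewrite -subr_eq0 opprK hz0.
clear hz0; have nc : 0 < normc c by exact: normc_gt0.
have hDn : 0 < normc D by exact: normc_gt0.
set Y : R := (normc a + normc D / (normc c * e) + 1) / normc c.
have hY : normc c * Y = normc a + normc D / (normc c * e) + 1 by rewrite /Y; field; lra.
have hq : 0 <= normc D / (normc c * e) by apply: divr_ge0; [lra| apply: mulr_ge0; lra].
set zeta : C := Complex 0 Y.
have hbig : normc D / (normc c * e) + 1 <= normc (a - c * zeta).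
  have := ler_normcB (c * zeta) a; rewrite normcM normc_imaginary.
  have hY0 : 0 <= Y by apply: divr_ge0; [have := normc_ge0 a; lra| lra].
  by rewrite (ger0_norm hY0) hY -[c * zeta - a]opprB normcN; lra.
have hne : a - c * zeta != 0 by rewrite -normc_eq0 gt_eqF //; apply: lt_le_trans hbig; lra.
exists (Psi zeta); split; last first.
  rewrite circ_domE den_mobius_inv_neq0 //= mobius_invK //.
  by rewrite /Y; apply: divr_gt0 => //; have := normc_ge0 a; lra.
have -> : Psi zeta - - d / c = D / (c * (a - c * zeta)).
  by rewrite /mobius; field; rewrite hne c0.
rewrite normcM normcV normcM ltr_pdivrMr; last by apply: mulr_gt0 => //; lra.
have : e * (normc c * (normc D / (normc c * e) + 1)) <= e * (normc c * normc (a - c * zeta)).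
  by apply: ler_wpM2l; [lra| apply: ler_wpM2l; lra].
have -> : e * (normc c * (normc D / (normc c * e) + 1)) = normc D + e * normc c.
  by field; lra.
have : 0 < e * normc c by apply: mulr_gt0.
lra.
Qed.

Lemma circ_dom_near_real (z : C) (e : R) : c * z + d != 0 -> Im (Phi z) = 0 -> 0 < e ->
  exists w, normc (w - z) < e /\ Cd w.
Proof.
move=> hz hI he.
have hden : - c * Phi z + a != 0 by rewrite mulNr addrC num_mobius_neq0.
have [e' he' hcont] := mobius_continuous d (- b) hden he.
set zeta := Phi z + Complex 0 (e' / 2).
have hdist : normc (zeta - Phi z) < e'.
  by rewrite /zeta addrC addKr normc_imaginary gtr0_norm; lra.
have [h1 h2] := hcont zeta hdist.
have hne : a - c * zeta != 0 by rewrite -mulNr addrC.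
exists (Psi zeta); split; first by rewrite -[z in _ - z](mobiusK hD hz).
by rewrite circ_domE den_mobius_inv_neq0 //= mobius_invK // /zeta ImD hI /= add0r; lra.
Qed.

Lemma boundary_circ_dom_sup z : c * z + d = 0 \/ Im (Phi z) = 0 -> boundary Cd z.
Proof.
move=> hz e he; split; last first.
  exists z; rewrite subrr ltc_normc normc0; split => //; rewrite circ_domE.
  by case: hz => [->|->]; rewrite ?eqxx ?ltxx ?andbF.
have [w [hw Cw]] : exists w, normc (w - z) < e /\ Cd w.
  have [hz0|hz0] := eqVneq (c * z + d) 0; first exact: circ_dom_near_pole.
  by apply: circ_dom_near_real => //; case: hz => // h; rewrite h eqxx in hz0.
by exists w; rewrite ltc_normc.
Qed.

Lemma boundary_circ_domE z : boundary Cd z <-> c * z + d = 0 \/ Im (Phi z) = 0.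
Proof. by split; [exact: boundary_circ_dom_sub| exact: boundary_circ_dom_sup]. Qed.

End Boundary.

Section Transfer.
Variable R : realType.
Local Notation C := (R[i]).
Variables (a b c d : C).
Hypothesis hD : a * d - b * c != 0.
Local Notation Cd := (circ_dom a b c d).

Lemma stable_phi_circ (k : nat) (q : {poly C}) : (size q <= k.+1)%N ->
  stable (upperH (R:=R)) q -> stable Cd (phi a b c d k q).
Proof.
move=> hs [q0 hq]; split; first by apply: contra q0 => /eqP /(phi_eq0 hD hs) ->.
move=> z; rewrite /circ_dom => /andP [hz hPhi].
by apply: contraL hPhi => /(root_phi_mobius hs hz); apply: contraL; exact: hq.
Qed.

Lemma stable_circ_phi (k : nat) (q : {poly C}) : (size q <= k.+1)%N ->
  (phi a b c d k q)`_k != 0 -> stable Cd (phi a b c d k q) -> stable (upperH (R:=R)) q.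
Proof.
move=> hs hl [f0 hf]; split; first by apply: contra f0 => /eqP ->; rewrite phi0.
move=> w hw; apply/negP => hr; have [hden hpsi hroot] := root_phi_mobius_inv hD hs hl hr.
have : Cd (mobius d (- b) (- c) a w) by rewrite /circ_dom hden hpsi.
by move/hf; rewrite hroot.
Qed.

Lemma zeros_phi_boundary (k : nat) (q : {poly C}) : (size q <= k.+1)%N ->
  zeros_in (realLine (R:=R)) q -> zeros_in (boundary Cd) (phi a b c d k q).
Proof.
move=> hs [q0 hq]; split; first by apply: contra q0 => /eqP /(phi_eq0 hD hs) ->.
move=> z hr; apply/(boundary_circ_domE hD).
have [->|hz] := eqVneq (c * z + d) 0; first by left.
by right; apply/eqP; rewrite -realLineE; apply: hq; exact: root_phi_mobius hs hz hr.
Qed.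

Lemma zeros_boundary_phi (k : nat) (q : {poly C}) : (size q <= k.+1)%N ->
  (phi a b c d k q)`_k != 0 -> zeros_in (boundary Cd) (phi a b c d k q) ->
  zeros_in (realLine (R:=R)) q.
Proof.
move=> hs hl [f0 hf]; split; first by apply: contra f0 => /eqP ->; rewrite phi0.
move=> w hr; have [hden hpsi hroot] := root_phi_mobius_inv hD hs hl hr.
case/(boundary_circ_domE hD): (hf _ hroot) => [e|]; first by rewrite e eqxx in hden.
by rewrite hpsi realLineE => ->.
Qed.

End Transfer.

Section Approximation.
Variable R : realType.
Local Notation C := (R[i]).
Variable n : nat.

Definition coef_dist (f g : {poly C}) : R := \sum_(i < n.+1) normc (f`_i - g`_i).

Lemma coef_dist_ge0 f g : 0 <= coef_dist f g.
Proof. by apply: sumr_ge0 => i _; exact: normc_ge0. Qed.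

Lemma coef_dist_triangle f g h : coef_dist f h <= coef_dist f g + coef_dist g h.
Proof.
rewrite /coef_dist -big_split /=; apply: ler_sum => i _.
by rewrite -[f`_i - h`_i](subrKA g`_i) le_normcD.
Qed.

Lemma coef_distxx f : coef_dist f f = 0.
Proof. by rewrite /coef_dist big1 // => i _; rewrite subrr normc0. Qed.

Definition linear_on (L : {poly C} -> C) := forall (k : C) (f g : {poly C}),
  (size f <= n.+1)%N -> (size g <= n.+1)%N -> L (k *: f + g) = k * L f + L g.

Definition nonzero_on (L : {poly C} -> C) :=
  exists2 h : {poly C}, (size h <= n.+1)%N & L h != 0.

Lemma linear_on0 L : linear_on L -> L 0 = 0.
Proof.
move=> hL; have := hL (-1) 0 0; rewrite scaler0 addr0 size_poly0 => /(_ isT isT).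
by rewrite mulN1r addNr.
Qed.

Lemma linear_on_sum L (j : nat) (cf : nat -> C) (P : nat -> {poly C}) : linear_on L ->
  (forall i, (i < j)%N -> (size (P i) <= n.+1)%N) ->
  L (\sum_(i < j) cf i *: P i) = \sum_(i < j) cf i * L (P i).
Proof.
move=> hL; elim: j => [|j IH] hP; first by rewrite !big_ord0 linear_on0.
rewrite !big_ord_recr /= addrC hL ?hP //.
  by rewrite IH 1?addrC // => i hi; apply: hP; exact: ltnW.
apply: leq_trans (size_sum _ _ _) _; apply/bigmax_leqP => i _.
by apply: leq_trans (size_scale_leq _ _) _; apply: hP; exact: ltnW (ltn_ord i).
Qed.

Lemma linear_on_expand L (p : {poly C}) : linear_on L -> (size p <= n.+1)%N ->
  L p = \sum_(i < n.+1) p`_i * L 'X^i.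
Proof.
move=> hL hs; have pE : p = \sum_(i < n.+1) p`_i *: 'X^i.
  rewrite -poly_def; apply/polyP => i; rewrite coef_poly.
  by case: ltnP => // h; rewrite nth_default //; exact: leq_trans hs h.
rewrite {1}pE (@linear_on_sum L n.+1 (fun i => p`_i) (fun i => 'X^i) hL) // => i hi.
by rewrite size_polyXn.
Qed.

Definition translate (g : {poly C}) (t : R) : {poly C} :=
  \sum_(i < n.+1) (t%:C ^+ i) *: nderivn i g.

Lemma size_nderivn_leq (g : {poly C}) i : (size (nderivn i g) <= size g - i)%N.
Proof. exact: size_poly. Qed.

Lemma size_nderivn_wide (g : {poly C}) i :
  (size g <= n.+1)%N -> (size (nderivn i g) <= n.+1)%N.
Proof. by move=> h; apply: leq_trans (size_nderivn_leq g i) (leq_trans (leq_subr _ _) h). Qed.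

Lemma horner_translate (g : {poly C}) t x :
  (size g <= n.+1)%N -> (translate g t).[x] = g.[x + t%:C].
Proof.
move=> hs; rewrite (nderiv_taylor_wide _ hs); last exact: mulrC.
by rewrite /translate horner_sum; apply: eq_bigr => i _; rewrite hornerZ mulrC.
Qed.

Lemma size_translate (g : {poly C}) t :
  (size g <= n.+1)%N -> (size (translate g t) <= n.+1)%N.
Proof.
move=> hs; apply: leq_trans (size_sum _ _ _) _; apply/bigmax_leqP => i _.
by apply: leq_trans (size_scale_leq _ _) _; exact: size_nderivn_wide.
Qed.

Lemma coef_translate_top (g : {poly C}) t : (size g <= n.+1)%N -> (translate g t)`_n = g`_n.
Proof.
move=> hs; rewrite /translate coef_sum big_ord_recl /= expr0 scale1r nderivn0 big1 ?addr0 //.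
move=> i _; rewrite coefZ coef_nderivn nth_default ?mul0rn ?mulr0 //.
by apply: leq_trans hs _; rewrite /bump /=; lia.
Qed.

Lemma coef_dist_translate (g : {poly C}) t : (size g <= n.+1)%N -> 0 <= t -> t <= 1 ->
  coef_dist (translate g t) g <= t * \sum_(j < n.+1) \sum_(i < n) normc ((nderivn i.+1 g)`_j).
Proof.
move=> hs ht0 ht1; rewrite /coef_dist mulr_sumr; apply: ler_sum => j _.
rewrite /translate coef_sum big_ord_recl /= expr0 scale1r nderivn0 (addrC g`_j) addrK.
apply: le_trans (ler_normc_sum _ _) _; rewrite mulr_sumr; apply: ler_sum => i _.
rewrite coefZ normcM normcX normc_real ger0_norm //.
apply: ler_wpM2r; first exact: normc_ge0.
by rewrite /bump /= add1n exprS; apply: ler_piMr => //; exact: exprn_ile1.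
Qed.

Lemma linear_on_translate (L : {poly C} -> C) (g : {poly C}) t :
  linear_on L -> (size g <= n.+1)%N ->
  L (translate g t) = (\poly_(i < n.+1) L (nderivn i g)).[t%:C].
Proof.
move=> hL hs; rewrite horner_poly /translate.
rewrite (@linear_on_sum L n.+1 (fun i => t%:C ^+ i) (fun i => nderivn i g) hL).
  by apply: eq_bigr => i _; rewrite mulrC.
by move=> i _; exact: size_nderivn_wide.
Qed.

(* The normalized derivatives of a polynomial of degree exactly [n] have
   degrees [n, n - 1, ..., 0], so they form a triangular basis of [C_n[z]]. *)
Lemma linear_on_nderivn_span (L : {poly C} -> C) (g : {poly C}) :
  linear_on L -> size g = n.+1 -> (forall i, (i < n.+1)%N -> L (nderivn i g) = 0) ->
  forall h : {poly C}, (size h <= n.+1)%N -> L h = 0.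
Proof.
move=> hL hs hz; have gn := coef_size_neq0 hs.
suff H : forall j, (j <= n.+1)%N -> forall h : {poly C}, (size h <= j)%N -> L h = 0.
  by move=> h; apply: H.
elim=> [|j IH] hj h hh.
  by move: hh; rewrite leqn0 size_poly_eq0 => /eqP ->; exact: linear_on0.
set e := nderivn (n - j) g.
have he : e`_j != 0.
  by rewrite /e coef_nderivn subnK // mulrn_eq0 negb_or gn andbT -lt0n bin_gt0; lia.
have hse : (size e <= j.+1)%N.
  by apply: leq_trans (size_nderivn_leq _ _) _; rewrite hs; lia.
set cc := h`_j / e`_j; set h' := h - cc *: e.
have hh' : (size h' <= j)%N.
  apply/leq_sizeP => l hl; rewrite /h' coefB coefZ.
  case: (ltngtP l j) hl => // [lt|->] _; last by rewrite /cc divfK // subrr.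
  by rewrite !nth_default ?mulr0 ?subr0 //; [exact: leq_trans hse lt|exact: leq_trans hh lt].
have s1 : (size e <= n.+1)%N := leq_trans hse hj.
have s2 : (size h' <= n.+1)%N := leq_trans hh' (ltnW hj).
rewrite -[h](subrK (cc *: e)) -/h' addrC hL // hz; last lia.
by rewrite mulr0 add0r; apply: IH => //; exact: ltnW.
Qed.

Lemma nonzero_on_translate_poly (L : {poly C} -> C) (g : {poly C}) :
  linear_on L -> nonzero_on L -> size g = n.+1 -> \poly_(i < n.+1) L (nderivn i g) != 0.
Proof.
move=> hL [h sh nh] hs; apply: contra nh => /eqP P0; apply/eqP.
apply: (linear_on_nderivn_span hL hs) => // i hi.
by have := congr1 (fun p : {poly C} => p`_i) P0; rewrite coef_poly hi coef0.
Qed.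

Lemma poly_nonroot_near0 (Q : {poly C}) (t0 : R) : Q != 0 -> 0 < t0 ->
  exists t : R, [/\ 0 < t, t <= t0 & Q.[t%:C] != 0].
Proof.
move=> Q0 ht0; set ts := [seq t0 / (k.+1)%:R | k <- iota 0 (size Q)].
have [/hasP [t /mapP [k _ ->] hQ]|] := boolP (has (fun t : R => Q.[t%:C] != 0) ts).
  exists (t0 / (k.+1)%:R); split => //; first by apply: divr_gt0 => //; rewrite ltr0n.
  have hk : (1 : R) <= k.+1%:R by rewrite ler1n.
  by rewrite ler_pdivrMr ?ltr0n //; nra.
rewrite -all_predC => hall.
have : (size [seq t%:C | t <- ts] < size Q)%N.
  apply: max_poly_roots => //.
    apply/allP => x /mapP [t ht ->]; move/allP: hall => /(_ t ht) /=.
    by rewrite negbK rootE.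
  rewrite map_inj_uniq; last exact: complexI.
  rewrite map_inj_uniq ?iota_uniq // => k1 k2 /eqP.
  rewrite eqr_div ?pnatr_eq0 // => /eqP h.
  have t00 : t0 != 0 by rewrite gt_eqF.
  by move/(mulfI t00): h => /eqP; rewrite eqr_nat => /eqP [].
by rewrite !size_map size_iota ltnn.
Qed.

Variable K : C -> Prop.
Hypothesis K_real : forall r : R, K r%:C.
Hypothesis K_shift : forall z (t : R), K z -> K (z + t%:C).

(* Multiplying by [1 + eps * X] adds the real root [- eps^-1]. *)
Lemma raise_degree_step (g : {poly C}) (eta : R) : zeros_in K g -> 0 < eta ->
  exists g1, [/\ zeros_in K g1, size g1 = (size g).+1 & coef_dist g1 g <= eta].
Proof.
move=> [g0 hgr] heta; set M := coef_dist ('X * g) 0.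
have hM : 0 <= M by exact: coef_dist_ge0.
set eps := eta / (M + 1).
have heps : 0 < eps by apply: divr_gt0 => //; lra.
have e0 : eps%:C != 0 by rewrite -[0]/((0:R)%:C) (inj_eq (@complexI _)) gt_eqF.
set r := (- eps^-1)%:C.
have er : eps%:C * r = -1 by rewrite /r -rmorphM /= mulrN mulfV ?gt_eqF // rmorphN rmorph1.
exists (eps%:C *: (g * ('X - r%:P))); split.
- split; first by rewrite scaler_eq0 negb_or e0 mulf_neq0 // polyXsubC_eq0.
  move=> z; rewrite rootZ // rootM => /orP [/hgr //|].
  by rewrite root_XsubC => /eqP ->; exact: K_real.
- by rewrite size_scale // size_mul ?polyXsubC_eq0 // size_XsubC addn2.
have -> : eps%:C *: (g * ('X - r%:P)) = g + eps%:C *: ('X * g).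
  rewrite mulrBr scalerBr [g * r%:P]mulrC mul_polyC scalerA er scaleN1r opprK.
  by rewrite addrC [g * 'X]mulrC.
have -> : coef_dist (g + eps%:C *: ('X * g)) g = eps * M.
  rewrite /M /coef_dist mulr_sumr; apply: eq_bigr => i _.
  by rewrite coefD coef0 subr0 (addrC g`_i) addrK coefZ normcM normc_real gtr0_norm.
rewrite /eps mulrAC ler_pdivrMr; last lra.
by rewrite ler_pM2l //; lra.
Qed.

Lemma raise_degree_approx (g : {poly C}) (eta : R) : zeros_in K g -> (size g <= n.+1)%N ->
  0 < eta -> exists g', [/\ zeros_in K g', size g' = n.+1 & coef_dist g' g <= eta].
Proof.
move=> hg hs heta; have := subnKC hs; move: (n.+1 - size g)%N => k {hs}.
elim: k g hg eta heta => [|k IH] g hg eta heta hk.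
  by exists g; split => //; [rewrite -hk addn0|rewrite coef_distxx ltW].
have he2 : 0 < eta / 2 by lra.
have [g1 [hg1 hs1 hd1]] := raise_degree_step hg he2.
have hk1 : (size g1 + k = n.+1)%N by rewrite hs1 addSnnS.
have [g' [hg' hs' hd']] := IH g1 hg1 _ he2 hk1.
exists g'; split => //; apply: le_trans (coef_dist_triangle g' g1 g) _; lra.
Qed.

(* A small real translate of [g] keeps its zeros in [K] and, being a generic
   point of the polynomial curve [t |-> translate g t], avoids the kernels of
   [L1] and [L2]. *)
Lemma translate_approx (L1 L2 : {poly C} -> C) (g : {poly C}) (eta : R) :
  linear_on L1 -> linear_on L2 -> nonzero_on L1 -> nonzero_on L2 ->
  zeros_in K g -> size g = n.+1 -> 0 < eta -> exists g',
    [/\ zeros_in K g', size g' = n.+1, L1 g' != 0, L2 g' != 0 & coef_dist g' g <= eta].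
Proof.
move=> hL1 hL2 nz1 nz2 hg hs heta; have hs' : (size g <= n.+1)%N by rewrite hs.
have P1nz := nonzero_on_translate_poly hL1 nz1 hs.
have P2nz := nonzero_on_translate_poly hL2 nz2 hs.
set Mg := \sum_(j < n.+1) \sum_(i < n) normc ((nderivn i.+1 g)`_j).
have hMg : 0 <= Mg by apply: sumr_ge0 => j _; apply: sumr_ge0 => i _; exact: normc_ge0.
set t0 := Num.min 1 (eta / (Mg + 1)).
have ht0 : 0 < t0 by rewrite /t0 lt_min ltr01 /=; apply: divr_gt0 => //; lra.
have [t [ht htt0]] := poly_nonroot_near0 (mulf_neq0 P1nz P2nz) ht0.
rewrite hornerM mulf_eq0 negb_or => /andP [q1 q2].
have ht1 : t <= 1 by apply: le_trans htt0 _; rewrite /t0 ge_min lexx.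
have hte : t <= eta / (Mg + 1) by apply: le_trans htt0 _; rewrite /t0 ge_min lexx orbT.
have sz : size (translate g t) = n.+1.
  apply: size_poly_exact; first exact: size_translate.
  by rewrite coef_translate_top // coef_size_neq0.
exists (translate g t); split => //.
- split; first by rewrite -size_poly_eq0 sz.
  move=> z; rewrite rootE horner_translate // -rootE => /(proj2 hg) hK.
  by have := K_shift (- t) hK; rewrite -addrA -rmorphD /= subrr addr0.
- by rewrite linear_on_translate.
- by rewrite linear_on_translate.
apply: le_trans (coef_dist_translate hs' (ltW ht) ht1) _; rewrite -/Mg.
have : t * Mg <= eta / (Mg + 1) * Mg by apply: ler_wpM2r.
have : eta / (Mg + 1) * Mg <= eta by rewrite mulrAC ler_pdivrMr ?ler_pM2l //; lra.
lra.
Qed.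

Lemma zeros_in_approx (L1 L2 : {poly C} -> C) (g : {poly C}) (eta : R) :
  linear_on L1 -> linear_on L2 -> nonzero_on L1 -> nonzero_on L2 ->
  zeros_in K g -> (size g <= n.+1)%N -> 0 < eta -> exists g',
    [/\ zeros_in K g', size g' = n.+1, L1 g' != 0, L2 g' != 0 & coef_dist g' g <= eta].
Proof.
move=> hL1 hL2 nz1 nz2 hg hs heta; have he2 : 0 < eta / 2 by lra.
have [g1 [hg1 hs1 hd1]] := raise_degree_approx hg hs he2.
have [g2 [hg2 hs2 n1 n2 hd2]] := translate_approx hL1 hL2 nz1 nz2 hg1 hs1 he2.
by exists g2; split => //; apply: le_trans (coef_dist_triangle g2 g1 g) _; lra.
Qed.

End Approximation.

Section StableTransfer.
Variable R : realType.
Local Notation C := (R[i]).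
Variables (n m : nat) (T S : {poly C} -> {poly C}) (a b c d : C).
Hypothesis T_linear : forall (k : C) (f g : {poly C}),
  (size f <= n.+1)%N -> (size g <= n.+1)%N -> T (k *: f + g) = k *: T f + T g.
Hypothesis T_max : exists f : {poly C}, (size f <= n.+1)%N /\ (size (T f) = m.+1)%N.
Hypothesis hD : a * d - b * c != 0.
Hypothesis S_def : forall f : {poly C}, (size f <= n.+1)%N ->
  (size (S f) <= m.+1)%N /\ phi a b c d m (S f) = T (phi a b c d n f).
Local Notation Cd := (circ_dom a b c d).

Lemma size_S (f : {poly C}) : (size f <= n.+1)%N -> (size (S f) <= m.+1)%N.
Proof. by move=> h; case: (S_def h). Qed.

Lemma phi_S (f : {poly C}) : (size f <= n.+1)%N -> phi a b c d m (S f) = T (phi a b c d n f).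
Proof. by move=> h; case: (S_def h). Qed.

Lemma S_linear (k : C) (f g : {poly C}) : (size f <= n.+1)%N -> (size g <= n.+1)%N ->
  S (k *: f + g) = k *: S f + S g.
Proof.
move=> hf hg; have hsz (u v : {poly C}) (M : nat) :
    (size u <= M)%N -> (size v <= M)%N -> (size (k *: u + v)%R <= M)%N.
  move=> hu hv; apply: leq_trans (size_polyD _ _) _; rewrite geq_max hv andbT.
  exact: leq_trans (size_scale_leq _ _) hu.
have hfg := hsz _ _ _ hf hg.
apply: (phi_inj hD (size_S hfg) (hsz _ _ _ (size_S hf) (size_S hg))).
by rewrite phi_S // phiP T_linear ?size_phi // phiP !phi_S.
Qed.

(* When these top coefficients do not vanish, neither [phi_n g] nor
   [phi_m (S g)] has a zero at the pole of [Phi]. *)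
Definition top_phi (g : {poly C}) := (phi a b c d n g)`_n.
Definition top_phiS (g : {poly C}) := (phi a b c d m (S g))`_m.

Lemma linear_on_top_phi : linear_on n top_phi.
Proof. by move=> k f g hf hg; rewrite /top_phi phiP coefD coefZ. Qed.

Lemma linear_on_top_phiS : linear_on n top_phiS.
Proof. by move=> k f g hf hg; rewrite /top_phiS S_linear // phiP coefD coefZ. Qed.

Lemma nonzero_on_top_phi : nonzero_on n top_phi.
Proof.
have [g hg e] := phi_surj hD (eq_leq (size_polyXn C n)).
by exists g; rewrite // /top_phi e coefXn eqxx oner_eq0.
Qed.

Lemma nonzero_on_top_phiS : nonzero_on n top_phiS.
Proof.
have [f [hf hTf]] := T_max; have [g hg e] := phi_surj hD hf.
by exists g; rewrite // /top_phiS phi_S // e coef_size_neq0.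
Qed.

Lemma horner_S_lipschitz (z : C) : exists2 K : R, 0 <= K & forall g' g : {poly C},
  (size g' <= n.+1)%N -> (size g <= n.+1)%N ->
  normc ((S g').[z] - (S g).[z]) <= K * coef_dist n g' g.
Proof.
have hL : linear_on n (fun p => (S p).[z]).
  by move=> k f g hf hg; rewrite S_linear // hornerD hornerZ.
exists (\sum_(i < n.+1) normc (S 'X^i).[z]); first by apply: sumr_ge0 => i _; exact: normc_ge0.
move=> g' g h1 h2; have hd : (size (g' - g)%R <= n.+1)%N.
  by apply: leq_trans (size_polyD _ _) _; rewrite size_polyN geq_max h1 h2.
have -> : (S g').[z] - (S g).[z] = (S (g' - g)).[z].
  have -> : g' - g = (-1) *: g + g' by rewrite scaleN1r addrC.
  rewrite S_linear //.
  by rewrite hornerD hornerZ mulN1r addrC.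
rewrite (linear_on_expand hL hd); apply: le_trans (ler_normc_sum _ _) _.
rewrite /coef_dist mulr_sumr; apply: ler_sum => i _.
rewrite normcM coefB mulrC; apply: ler_wpM2r; first exact: normc_ge0.
by rewrite (bigD1 i) //= lerDl; apply: sumr_ge0 => j _; exact: normc_ge0.
Qed.

Lemma stable_or0_S_closed (s : R) (g : {poly C}) : s * s = 1 -> (size g <= n.+1)%N ->
  (forall eta : R, 0 < eta -> exists g' : {poly C},
     [/\ (size g' <= n.+1)%N, coef_dist n g' g <= eta & stable_or0 s (S g')]) ->
  stable_or0 s (S g).
Proof.
move=> ss hg hfam; apply: (stable_or0_closed ss (size_S hg)) => z1 z2 eta heta.
have [K1 hK1 b1] := horner_S_lipschitz z1; have [K2 hK2 b2] := horner_S_lipschitz z2.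
have he : 0 < eta / (K1 + K2 + 1) by apply: divr_gt0 => //; lra.
have [g' [hs' hd' hn']] := hfam _ he.
have hd0 : 0 <= coef_dist n g' g by exact: coef_dist_ge0.
have key K : 0 <= K -> K <= K1 + K2 -> K * coef_dist n g' g <= eta.
  move=> hK hKK; apply: le_trans (_ : (K1 + K2 + 1) * (eta / (K1 + K2 + 1)) <= eta).
    by apply: ler_pM => //; lra.
  by rewrite mulrC mulfVK ?gt_eqF //; lra.
exists (S g'); split; [exact: size_S|exact: hn'| |].
- by apply: le_trans (b1 _ _ hs' hg) _; apply: key => //; lra.
- by apply: le_trans (b2 _ _ hs' hg) _; apply: key => //; lra.
Qed.

Definition full_degree (g : {poly C}) :=
  [/\ size g = n.+1, top_phi g != 0 & top_phiS g != 0].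

Lemma S_closure (K : C -> Prop) (s : R) : (forall r : R, K r%:C) ->
  (forall z (t : R), K z -> K (z + t%:C)) -> s * s = 1 ->
  (forall g : {poly C}, full_degree g -> zeros_in K g -> stable_or0 s (S g)) ->
  forall g : {poly C}, (size g <= n.+1)%N -> zeros_in K g -> stable_or0 s (S g).
Proof.
move=> K_real K_shift ss H g hs hg; apply: (stable_or0_S_closed ss hs) => eta heta.
have [g' [h1 h2 h3 h4 h5]] := zeros_in_approx K_real K_shift linear_on_top_phi
  linear_on_top_phiS nonzero_on_top_phi nonzero_on_top_phiS hg hs heta.
by exists g'; split; [rewrite h2|by []|apply: H].
Qed.

Lemma S_upperH_closure :
  (forall g : {poly C}, full_degree g -> stable (upperH (R:=R)) g ->
     stable (upperH (R:=R)) (S g) \/ S g = 0) ->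
  forall g : {poly C}, (size g <= n.+1)%N -> stable (upperH (R:=R)) g ->
    stable (upperH (R:=R)) (S g) \/ S g = 0.
Proof.
move=> H g hs /stable_upperHE hg; apply/stable_or0_upperH.
apply: (S_closure _ _ (mulr1 1)) hs hg => [r|z t|g' hg' /stable_upperHE /(H _ hg')].
- by rewrite /closed_lowerH.
- by rewrite /closed_lowerH ImD /= addr0.
- by move/stable_or0_upperH.
Qed.

Lemma S_realLine_closure :
  (forall g : {poly C}, full_degree g -> zeros_in (realLine (R:=R)) g ->
     zeros_in (realLine (R:=R)) (S g) \/ S g = 0) ->
  forall g : {poly C}, (size g <= n.+1)%N -> zeros_in (realLine (R:=R)) g ->
    zeros_in (realLine (R:=R)) (S g) \/ S g = 0.
Proof.
move=> H g hs hg; apply/stable_or0_realLine.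
have hK (s : R) : s * s = 1 -> stable_or0 s (S g).
  move=> ss; apply: (S_closure _ _ ss) hs hg => [r|z t|g' hg' /(H _ hg')].
  - by rewrite realLineE.
  - by rewrite !realLineE ImD /= addr0.
  by case=> [[_ h]|->]; [right => w /h; rewrite realLineE => /eqP ->; rewrite mulr0|left].
by split; apply: hK; rewrite ?mulr1 ?mulrNN ?mulr1.
Qed.

Lemma full_degree_phi (g : {poly C}) : full_degree g -> size (phi a b c d n g) = n.+1.
Proof. by case=> _ hl _; apply: size_poly_exact => //; exact: size_phi. Qed.

Lemma T_stable_S_stable :
  (forall f : {poly C}, size f = n.+1 -> stable Cd f -> stable Cd (T f) \/ T f = 0) ->
  forall g : {poly C}, (size g <= n.+1)%N -> stable (upperH (R:=R)) g ->
    stable (upperH (R:=R)) (S g) \/ S g = 0.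
Proof.
move=> Hi; apply: S_upperH_closure => g hg hst; have [hs hl hlS] := hg.
have hs' : (size g <= n.+1)%N by rewrite hs.
have [hT|hT0] := Hi _ (full_degree_phi hg) (stable_phi_circ hD hs' hst).
  by left; apply: (stable_circ_phi hD (size_S hs') hlS); rewrite phi_S.
by right; apply: (phi_eq0 hD (size_S hs')); rewrite phi_S.
Qed.

Lemma S_stable_T_stable :
  (forall g : {poly C}, (size g <= n.+1)%N -> stable (upperH (R:=R)) g ->
     stable (upperH (R:=R)) (S g) \/ S g = 0) ->
  forall f : {poly C}, size f = n.+1 -> stable Cd f -> stable Cd (T f) \/ T f = 0.
Proof.
move=> H f hsf hst; have [g hg e] := phi_surj hD (eq_leq hsf).
have hl : (phi a b c d n g)`_n != 0 by rewrite e coef_size_neq0.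
rewrite -e in hst; rewrite -e -phi_S //.
case: (H g hg (stable_circ_phi hD hg hl hst)) => [hS|->]; last by right; rewrite phi0.
by left; exact: (stable_phi_circ hD (size_S hg) hS).
Qed.

Lemma T_real_S_real :
  (forall f : {poly C}, size f = n.+1 -> zeros_in (boundary Cd) f ->
     zeros_in (boundary Cd) (T f) \/ T f = 0) ->
  forall g : {poly C}, (size g <= n.+1)%N -> zeros_in (realLine (R:=R)) g ->
    zeros_in (realLine (R:=R)) (S g) \/ S g = 0.
Proof.
move=> Hiv; apply: S_realLine_closure => g hg hz; have [hs hl hlS] := hg.
have hs' : (size g <= n.+1)%N by rewrite hs.
have [hT|hT0] := Hiv _ (full_degree_phi hg) (zeros_phi_boundary hD hs' hz).
  by left; apply: (zeros_boundary_phi hD (size_S hs') hlS); rewrite phi_S.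
by right; apply: (phi_eq0 hD (size_S hs')); rewrite phi_S.
Qed.

Lemma S_real_T_real :
  (forall g : {poly C}, (size g <= n.+1)%N -> zeros_in (realLine (R:=R)) g ->
     zeros_in (realLine (R:=R)) (S g) \/ S g = 0) ->
  forall f : {poly C}, size f = n.+1 -> zeros_in (boundary Cd) f ->
    zeros_in (boundary Cd) (T f) \/ T f = 0.
Proof.
move=> H f hsf hz; have [g hg e] := phi_surj hD (eq_leq hsf).
have hl : (phi a b c d n g)`_n != 0 by rewrite e coef_size_neq0.
rewrite -e in hz; rewrite -e -phi_S //.
case: (H g hg (zeros_boundary_phi hD hg hl hz)) => [hS|->]; last by right; rewrite phi0.
by left; exact: (zeros_phi_boundary hD (size_S hg) hS).
Qed.

End StableTransfer.

Theorem mainTheorem17 (R : realType) (n m : nat) (T S : {poly R[i]} -> {poly R[i]})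
    (a b c d : R[i]) :
  (forall (k : R[i]) (f g : {poly R[i]}), (size f <= n.+1)%N -> (size g <= n.+1)%N ->
     T (k *: f + g) = k *: T f + T g) ->
  (forall f : {poly R[i]}, (size f <= n.+1)%N -> (size (T f) <= m.+1)%N) ->
  (exists f : {poly R[i]}, (size f <= n.+1)%N /\ (size (T f) = m.+1)%N) ->
  a * d - b * c != 0 ->
  (is_half_plane (circ_dom a b c d) -> c = 0) ->
  (forall f : {poly R[i]}, (size f <= n.+1)%N ->
     (size (S f) <= m.+1)%N /\ phi a b c d m (S f) = T (phi a b c d n f)) ->
  ((forall f : {poly R[i]}, (size f = n.+1)%N -> stable (circ_dom a b c d) f ->
        stable (circ_dom a b c d) (T f) \/ T f = 0)
     <-> (forall f : {poly R[i]}, (size f = n.+1)%N -> stable (upperH (R:=R)) f ->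
        stable (upperH (R:=R)) (S f) \/ S f = 0)) /\
  ((forall f : {poly R[i]}, (size f = n.+1)%N -> stable (upperH (R:=R)) f ->
        stable (upperH (R:=R)) (S f) \/ S f = 0)
     <-> (forall f : {poly R[i]}, (size f <= n.+1)%N -> stable (upperH (R:=R)) f ->
        stable (upperH (R:=R)) (S f) \/ S f = 0)) /\
  ((forall f : {poly R[i]}, (size f = n.+1)%N -> zeros_in (boundary (circ_dom a b c d)) f ->
        zeros_in (boundary (circ_dom a b c d)) (T f) \/ T f = 0)
     <-> (forall f : {poly R[i]}, (size f = n.+1)%N -> zeros_in (realLine (R:=R)) f ->
        zeros_in (realLine (R:=R)) (S f) \/ S f = 0)) /\
  ((forall f : {poly R[i]}, (size f = n.+1)%N -> zeros_in (realLine (R:=R)) f ->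
        zeros_in (realLine (R:=R)) (S f) \/ S f = 0)
     <-> (forall f : {poly R[i]}, (size f <= n.+1)%N -> zeros_in (realLine (R:=R)) f ->
        zeros_in (realLine (R:=R)) (S f) \/ S f = 0)).
Proof.
(* The bound on [T] follows from [S_def], and the argument works for every
   Mobius transformation. *)
move=> T_linear _ T_max hD _ S_def.
have i_iii := T_stable_S_stable T_linear T_max hD S_def.
have iii_i := S_stable_T_stable hD S_def.
have iv_vi := T_real_S_real T_linear T_max hD S_def.
have vi_iv := S_real_T_real hD S_def.
have ii_iii H := S_upperH_closure T_linear T_max hD S_def (fun g '(And3 hs _ _) => H g hs).
have v_vi H := S_realLine_closure T_linear T_max hD S_def (fun g '(And3 hs _ _) => H g hs).
split; [|split; [|split]]; split=> H.
- by move=> f /eq_leq; apply: i_iii H f.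
- exact: iii_i (ii_iii H).
- exact: ii_iii H.
- by move=> f /eq_leq; apply: H.
- by move=> f /eq_leq; apply: iv_vi H f.
- exact: vi_iv (v_vi H).
- exact: v_vi H.
- by move=> f /eq_leq; apply: H.
Qed.
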